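(* In the model and protocol $\mathrm{OciorABA}^*$ described in the context, let $j\in[1:n]$ be such that $\mathrm{ABBA}_j$ delivers output $1$ at some honest node. Then there is a value $y^{(j)}_j$ that $\mathrm{RBC}_j$ eventually delivers at every honest node, and there exists an honest node $\mathrm{Node}_i$, $i\in[1:n]\setminus\mathcal F$, whose input message $w_i$ satisfies $\mathrm{Enc}_j(w_i)=y^{(j)}_j$.
   Context: Model: there are $n$ nodes $\mathrm{Node}_1,\dots,\mathrm{Node}_n$ in an asynchronous network (every message sent between honest nodes is eventually delivered, with arbitrary adversarial delay). An adaptive adversary may corrupt (make dishonest/Byzantine) at most $t$ nodes in total; $\mathcal F\subseteq[1:n]$ denotes the set of dishonest nodes; $n\ge 3t+1$. Primitives used as black boxes: (RBC) For each $j\in[1:n]$ there is a reliable broadcast instance $\mathrm{RBC}_j$ with leader $\mathrm{Node}_j$, satisfying: Consistency (if two honest nodes output $w',w''$ then $w'=w''$); Validity (if the leader is honest and inputs $w$, every honest node eventually outputs $w$); Totality (if one honest node outputs a value, every honest node eventually outputs a value). (ABBA) For each $j\in[1:n]$ there is a binary Byzantine agreement instance $\mathrm{ABBA}_j$ (inputs and outputs in $\{0,1\}$), satisfying: Termination (if all honest nodes provide inputs, every honest node eventually outputs a value and terminates); Consistency (if an honest node outputs $b$, every honest node eventually outputs $b$); Validity (if all honest nodes input the same $b$, every honest node eventually outputs $b$). (Erasure code) An $(n,t+1)$ erasure code over an alphabet $\Sigma$: an encoder $\mathrm{Enc}$ mapping a message $w$ to $(\mathrm{Enc}_1(w),\dots,\mathrm{Enc}_n(w))\in\Sigma^n$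 and a decoder $\mathrm{Dec}$ such that for every set $K\subseteq[1:n]$ with $|K|=t+1$, $\mathrm{Dec}(\{\mathrm{Enc}_j(w)\}_{j\in K})=w$. Protocol $\mathrm{OciorABA}^*$, code for an honest $\mathrm{Node}_i$ with input message $w_i$: (1) Compute $(y^{(i)}_1,\dots,y^{(i)}_n)=\mathrm{Enc}(w_i)$ and input $y^{(i)}_i$ into $\mathrm{RBC}_i$ (as leader). (2) Upon delivery of a value $y^{(j)}_j$ from $\mathrm{RBC}_j$ (after step (1) has been executed), if $\mathrm{Node}_i$ has not yet given an input to $\mathrm{ABBA}_j$: set $a_i[j]=1$ if $y^{(j)}_j=y^{(i)}_j$ and $a_i[j]=0$ otherwise, and input $a_i[j]$ into $\mathrm{ABBA}_j$. (3) Upon obtaining outputs from $n-t$ of the instances $\mathrm{ABBA}_1,\dots,\mathrm{ABBA}_n$, input $0$ into every $\mathrm{ABBA}_j$ to which $\mathrm{Node}_i$ has not yet given an input. (4) Upon obtaining outputs from all $n$ ABBA instances: let $S=\{j:\mathrm{ABBA}_j\text{ output }1\}$. If $|S|<t+1$, output a default value $\bot$ and terminate. Otherwise let $K$ be the set of the $t+1$ smallest elements of $S$, wait for delivery of $y^{(j)}_j$ from $\mathrm{RBC}_j$ for all $j\in K$, output $\mathrm{Dec}(\{y^{(j)}_j\}_{j\in K})$ and terminate. *)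

(* Abstract model of one (infinite, fair) asynchronous execution
   of OciorABA*, recording for each honest node the time-stamped events it sees. *)
From mathcomp Require Import all_boot.
Set Implicit Arguments. Unset Strict Implicit. Unset Printing Implicit Defensive.

(* An execution records, for each observer node i and instance j:
   - deliver i j  = Some (s, y) : RBC_j delivers value y at node i at time s
   - abba_in i j  = Some (s, b) : node i inputs b into ABBA_j at time s
   - abba_out i j = Some (s, b) : ABBA_j outputs b at node i at time s
   None means the event never happens ("eventually" = at some time). *)
Record execution (n : nat) (Sigma : Type) := Execution {
  deliver  : 'I_n -> 'I_n -> option (nat * Sigma);
  abba_in  : 'I_n -> 'I_n -> option (nat * bool);
  abba_out : 'I_n -> 'I_n -> option (nat * bool) }.

Definition erasure_code (n t : nat) (Sigma M : Type)
    (Enc : M -> 'I_n -> Sigma) (Dec : ('I_n -> option Sigma) -> M) : Prop :=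
  forall (w : M) (K : {set 'I_n}), #|K| = t.+1 ->
    Dec (fun k => if k \in K then Some (Enc w k) else None) = w.

(* RBC properties (honest nodes = nodes outside F).  The honest leader j inputs
   Enc_j(w_j) (protocol step (1)). *)
Definition rbc_properties (n : nat) (Sigma M : Type) (F : {set 'I_n})
    (Enc : M -> 'I_n -> Sigma) (w : 'I_n -> M) (e : execution n Sigma) : Prop :=
  [/\
      (forall j i i' s s' y y', i \notin F -> i' \notin F ->
         deliver e i j = Some (s, y) -> deliver e i' j = Some (s', y') -> y = y'),
      (forall j i, j \notin F -> i \notin F ->
         exists s, deliver e i j = Some (s, Enc (w j) j)) &
      (forall j i i', i \notin F -> i' \notin F ->
         deliver e i j <> None -> deliver e i' j <> None)].

Definition abba_properties (n : nat) (Sigma : Type) (F : {set 'I_n})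
    (e : execution n Sigma) : Prop :=
  forall j : 'I_n,
  [/\
      ((forall i, i \notin F -> abba_in e i j <> None) ->
         forall i, i \notin F -> abba_out e i j <> None),
      (forall i i' s b, i \notin F -> i' \notin F ->
         abba_out e i j = Some (s, b) -> exists s', abba_out e i' j = Some (s', b)) &
      (forall b, (forall i, i \notin F -> exists s, abba_in e i j = Some (s, b)) ->
         forall i, i \notin F -> exists s, abba_out e i j = Some (s, b))].

Definition outputs_by (n : nat) (Sigma : Type) (e : execution n Sigma)
    (i : 'I_n) (s : nat) : nat :=
  #|[set k | if abba_out e i k is Some (u, _) then u <= s else false]|.

(* Honest nodes follow steps (2) and (3) of OciorABA*:
   - upon delivery from RBC_j, input a_i[j] into ABBA_j unless already done;
   - upon having n - t ABBA outputs, input 0 into every ABBA not yet input to;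
   - these are the only ways an honest node gives input to an ABBA. *)
Definition protocol_honest (n t : nat) (Sigma : eqType) (M : Type) (F : {set 'I_n})
    (Enc : M -> 'I_n -> Sigma) (w : 'I_n -> M) (e : execution n Sigma) : Prop :=
  forall i j, i \notin F ->
  [/\ (forall s y, deliver e i j = Some (s, y) ->
         exists s' b, s' <= s /\ abba_in e i j = Some (s', b)),
      (forall s, n - t <= outputs_by e i s ->
         exists s' b, s' <= s /\ abba_in e i j = Some (s', b)) &
      (forall s b, abba_in e i j = Some (s, b) ->
         (exists y, deliver e i j = Some (s, y) /\ b = (y == Enc (w i) j))
         \/ (b = false /\ n - t <= outputs_by e i s))].

(* Every honest node eventually sees n - t ABBA outputs: the RBC of each honest
   leader delivers everywhere, so every honest node inputs into that ABBA, which
   therefore terminates.  Hence every honest node inputs something into ABBA_j.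
   If all these inputs were 0, validity of ABBA_j would force output 0; so some
   honest node i input 1, which by step (2) means it received Enc_j(w_i) from
   RBC_j, and totality plus consistency of RBC_j spread that value to every
   honest node. *)
From mathcomp Require Import all_boot.

Set Implicit Arguments. Unset Strict Implicit. Unset Printing Implicit Defensive.

Section OciorABA.

Variables (n t : nat) (Sigma : eqType) (M : Type).
Variables (Enc : M -> 'I_n -> Sigma) (F : {set 'I_n}) (w : 'I_n -> M).
Variable e : execution n Sigma.

Hypothesis card_F : #|F| <= t.
Hypothesis rbc : rbc_properties F Enc w e.
Hypothesis abba : abba_properties F e.
Hypothesis honest : protocol_honest t F Enc w e.

Lemma rbc_deliver_spread j i s y : i \notin F -> deliver e i j = Some (s, y) ->
  forall i', i' \notin F -> exists s', deliver e i' j = Some (s', y).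
Proof.
have [rbc_cons _ rbc_tot] := rbc => hi hd i' hi'.
have : deliver e i' j <> None by apply: (rbc_tot j i i' hi hi'); rewrite hd.
case hd': (deliver e i' j) => [[s' y']|] // _.
by exists s'; rewrite (rbc_cons _ _ _ _ _ _ _ hi' hi hd' hd).
Qed.

Lemma abba_out_honest_leader i k : i \notin F -> k \notin F ->
  abba_out e i k <> None.
Proof.
move=> hi hk; have [abba_term _ _] := abba k.
apply: abba_term => // i' hi'.
have [_ rbc_val _] := rbc; have [s hs] := rbc_val k i' hk hi'.
have [upon_deliver _ _] := honest k hi'.
by have [s' [b [_ ->]]] := upon_deliver _ _ hs.
Qed.

Lemma outputs_by_eventually i : i \notin F -> exists s, n - t <= outputs_by e i s.
Proof.
move=> hi; pose time k := if abba_out e i k is Some (u, _) then u else 0.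
exists (\max_(k < n) time k).
have out_honest : ~: F \subset [set k |
    if abba_out e i k is Some (u, _) then u <= \max_(k < n) time k else false].
  apply/subsetP => k; rewrite in_setC inE => hk.
  have := abba_out_honest_leader hi hk.
  have : time k <= \max_(k0 < n) time k0 by apply: leq_bigmax.
  by rewrite /time; case: (abba_out e i k) => [[u b]|].
apply: leq_trans (subset_leq_card out_honest).
by rewrite cardsCs card_ord setCK leq_sub2l.
Qed.

Lemma abba_in_eventually i j : i \notin F -> exists s b, abba_in e i j = Some (s, b).
Proof.
move=> hi; have [s hs] := outputs_by_eventually hi.
have [_ upon_outputs _] := honest j hi.
by have [s' [b [_ ->]]] := upon_outputs _ hs; exists s', b.
Qed.

Lemma abba_out_true_honest_input_true j i0 u : i0 \notin F ->
  abba_out e i0 j = Some (u, true) ->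
  exists i s, i \notin F /\ abba_in e i j = Some (s, true).
Proof.
move=> hi0 hout0.
case: (boolP [exists i, (i \notin F) &&
    (if abba_in e i j is Some (_, b) then b else false)]).
  case/existsP=> i /andP [hi]; case hin: (abba_in e i j) => [[s []]|] // _.
  by exists i, s.
rewrite negb_exists => /forallP no_true; exfalso.
have all_false i : i \notin F -> exists s, abba_in e i j = Some (s, false).
  move=> hi; have [s [b hin]] := abba_in_eventually j hi.
  by exists s; move: (no_true i); rewrite hi hin; case: b hin.
have [_ _ abba_val] := abba j.
by have [s] := abba_val false all_false i0 hi0; rewrite hout0.
Qed.

Lemma abba_in_true_deliver i j s : i \notin F ->
  abba_in e i j = Some (s, true) -> deliver e i j = Some (s, Enc (w i) j).
Proof.
move=> hi hin; have [_ _ input_source] := honest j hi.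
by case: (input_source _ _ hin) => [[y [hd /esym/eqP <-]]|[]].
Qed.

End OciorABA.

Theorem lemma2 (n t : nat) (Sigma : eqType) (M : Type)
    (Enc : M -> 'I_n -> Sigma) (Dec : ('I_n -> option Sigma) -> M)
    (F : {set 'I_n}) (w : 'I_n -> M) (e : execution n Sigma) (j : 'I_n) :
  3 * t + 1 <= n -> #|F| <= t ->
  erasure_code t Enc Dec ->
  rbc_properties F Enc w e ->
  abba_properties F e ->
  protocol_honest t F Enc w e ->
  (exists i0 u, i0 \notin F /\ abba_out e i0 j = Some (u, true)) ->
  exists y : Sigma,
    (forall i, i \notin F -> exists s, deliver e i j = Some (s, y)) /\
    (exists i, i \notin F /\ Enc (w i) j = y).
Proof.
move=> _ card_F _ rbc abba honest [i0 [u [hi0 hout0]]].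
have [i [s [hi hin]]] :=
  abba_out_true_honest_input_true card_F rbc abba honest hi0 hout0.
have hd := abba_in_true_deliver honest hi hin.
exists (Enc (w i) j); split; last by exists i.
move=> i' hi'; exact: (rbc_deliver_spread rbc hi hd hi').
Qed.
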